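(* Let $M\subset\mathbb{C}$ be a bounded domain, $\omega$ a finite positive Borel measure with compact support, $h$ harmonic on $M$, and $\lambda=e^{-2(p(\omega)+h)}$. If $z_0\in M$ satisfies $\omega(\{z_0\})\ge2\pi$, then every broken line $K\subset M$ having $z_0$ as an extremity satisfies $\tilde s_\lambda(K)=+\infty$; consequently $\rho_\lambda(z_0,z)=+\infty$ for every $z\in M\setminus\{z_0\}$, i.e. $z_0$ is a point at infinity of $\rho_\lambda$.
   Context: $p(z;\omega)=\frac1{2\pi}\iint\ln|z-\zeta|\,d\omega(\zeta)$. For a rectifiable arc $K$ with Euclidean length $s(K)$ and parameterization proportional to arc length $z:[0,1]\to\mathbb{C}$, $\tilde s_\lambda(K)=s(K)\int_0^1\lambda^{1/2}(z(t))\,dt$. $\rho_\lambda(a,b)$ is the infimum of $\tilde s_\lambda(L)$ over broken lines $L\subset M$ joining $a$ and $b$ (infimum of the empty set being $+\infty$). *)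

(* The complex plane C is modelled as R * R
   (real part, imaginary part) over an arbitrary R : realType. *)
From HB Require Import structures.
From mathcomp Require Import all_boot all_order all_algebra.
From mathcomp Require Import all_classical all_reals all_analysis.
Set Implicit Arguments. Unset Strict Implicit. Unset Printing Implicit Defensive.
Import Order.TTheory GRing.Theory Num.Theory.
Import numFieldNormedType.Exports.
Local Open Scope classical_set_scope.
Local Open Scope ring_scope.

Section Defs.
Context {R : realType}.
Local Notation C := (R * R)%type.

Definition cdist (z w : C) : R :=
  Num.sqrt ((z.1 - w.1) ^+ 2 + (z.2 - w.2) ^+ 2).

Definition lnabs (z w : C) : \bar R :=
  if cdist z w == 0 then -oo%E else (ln (cdist z w))%:E.

Definition msupp (om : set C -> \bar R) : set C :=
  [set z | forall U : set C, open U -> U z -> (0 < om U)%E].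

Definition logpot (om : {measure set C -> \bar R}) (z : C) : \bar R :=
  ((2 * pi)^-1)%:E * (\int[om]_(zeta in [set: C]) lnabs z zeta)%E.

Definition lam (om : {measure set C -> \bar R}) (h : C -> R) (z : C) : \bar R :=
  expeR (- (2%:E * (logpot om z + (h z)%:E)))%E.

Definition dx (f : C -> R) (z : C) : R := derive1 (fun t => f (t, z.2)) z.1.
Definition dy (f : C -> R) (z : C) : R := derive1 (fun t => f (z.1, t)) z.2.
Definition dxable (f : C -> R) (z : C) := derivable (fun t => f (t, z.2)) z.1 1.
Definition dyable (f : C -> R) (z : C) := derivable (fun t => f (z.1, t)) z.2 1.

Definition harmonic_on (M : set C) (h : C -> R) : Prop :=
  forall z, M z ->
    (dxable h z /\ dyable h z /\
     dxable (dx h) z /\ dyable (dx h) z /\ dxable (dy h) z /\ dyable (dy h) z) /\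
    ({for z, continuous h} /\ {for z, continuous (dx h)} /\
     {for z, continuous (dy h)} /\ {for z, continuous (dx (dx h))} /\
     {for z, continuous (dy (dx h))} /\ {for z, continuous (dx (dy h))} /\
     {for z, continuous (dy (dy h))}) /\
    dx (dx h) z + dy (dy h) z = 0.

Definition bounded_domain (M : set C) : Prop :=
  [/\ M !=set0, open M, connected M & bounded_set M].

Definition segment (a b : C) : set C :=
  [set a + t *: (b - a) | t in `[0%R, 1%R]%classic].

(* broken line given by its vertices a_0, ..., a_n (n >= 1), consecutive
   vertices distinct *)
Fixpoint consec_distinct (s : seq C) : Prop :=
  match s with
  | a :: ((b :: _) as s') => a <> b /\ consec_distinct s'
  | _ => True
  end.

Definition broken_line (s : seq C) : Prop := (1 < size s)%N /\ consec_distinct s.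

Fixpoint bl_in (M : set C) (s : seq C) : Prop :=
  match s with
  | a :: ((b :: _) as s') => segment a b `<=` M /\ bl_in M s'
  | _ => True
  end.

Fixpoint bl_length (s : seq C) : R :=
  match s with
  | a :: ((b :: _) as s') => cdist a b + bl_length s'
  | _ => 0
  end.

Fixpoint arcpt (s : seq C) (u : R) : C :=
  match s with
  | [::] => 0
  | [:: a] => a
  | a :: ((b :: _) as s') =>
      if u <= cdist a b then a + (u / cdist a b) *: (b - a)
      else arcpt s' (u - cdist a b)
  end.

Definition bl_param (s : seq C) (t : R) : C := arcpt s (t * bl_length s).

Definition stilde (lm : C -> \bar R) (s : seq C) : \bar R :=
  ((bl_length s)%:E *
   \int[lebesgue_measure]_(t in `[0%R, 1%R]%classic) poweR (lm (bl_param s t)) (2^-1))%E.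

(* rho_lambda(a, b) = inf of tilde s_lambda(L) over broken lines L in M
   joining a and b (inf of the empty set = +oo) *)
Definition rho (M : set C) (lm : C -> \bar R) (a b : C) : \bar R :=
  ereal_inf [set stilde lm s | s in
    [set s | broken_line s /\ bl_in M s /\ head 0 s = a /\ last 0 s = b]].

End Defs.

From HB Require Import structures.
From mathcomp Require Import all_boot all_order all_algebra.
From mathcomp Require Import all_classical all_reals all_analysis.
From mathcomp Require Import lra ring measurable_realfun.
Import HBNNSimple.
Import Order.TTheory GRing.Theory Num.Theory.
Import numFieldNormedType.Exports.
Local Open Scope classical_set_scope.
Local Open Scope ring_scope.
Set Implicit Arguments.
Unset Strict Implicit.
Unset Printing Implicit Defensive.

(* Write lambda^{1/2} = e^{-(p + h)} with p = p(omega).  Splitting the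
   kernel ln|z - zeta| into positive and negative parts, the positive part
   is at most ln D on the (compact) support of omega, while on the atom
   {z0} the negative part equals -ln|z - z0|; since omega({z0}) >= 2 pi this
   gives p(z) <= A + ln|z - z0| for z near z0.  As h is continuous at z0 it
   is bounded above there, hence lambda^{1/2}(z) >= c / |z - z0| near z0.
   Along a broken line K of length L with extremity z0, the arc-length
   parameterization satisfies |z(t) - z0| = L t (or L (1 - t)) near that
   extremity, so the integrand of tilde s_lambda(K) dominates (c / L) / t,
   whose integral over ]0, 1] diverges.  The divergence is proved with a
   dyadic lower step function, which needs no measurability of lambda.
   Finally rho_lambda(z0, z) is an infimum of values +oo.  Only harmonicity
   at z0 (through continuity) is used. *)

(* The integrand lambda^{1/2}(z(t)) is not known to be measurable, so the
   comparisons below work directly with the definition of the integral of a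
   nonnegative function as a supremum over simple functions. *)
Section IntegralComparison.
Context d (T : measurableType d) (R : realType).
Variable mu : {measure set T -> \bar R}.

Lemma ge0_le_integral_nomeas (D : set T) (f g : T -> \bar R) :
  (forall x, D x -> (0 <= f x)%E) -> (forall x, D x -> (f x <= g x)%E) ->
  (\int[mu]_(x in D) f x <= \int[mu]_(x in D) g x)%E.
Proof.
move=> f0 fg.
have g0 x : D x -> (0 <= g x)%E by move=> Dx; exact: le_trans (f0 x Dx) (fg x Dx).
rewrite (ge0_integralE _ f0) (ge0_integralE _ g0).
apply: ereal_sup_le => _ [k kf <-]; exists k => //= x.
apply: (le_trans (kf x)); rewrite /patch; case: ifP => // /set_mem Dx; exact: fg.
Qed.

Lemma ge0_integral_le_ae_cst (f : T -> \bar R) (c : R) (N : set T) :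
  (forall x, (0 <= f x)%E) -> 0 <= c -> measurable N -> mu N = 0%E ->
  (forall x, ~ N x -> (f x <= c%:E)%E) ->
  (\int[mu]_(x in setT) f x <= c%:E * mu setT)%E.
Proof.
move=> f0 c0 mN muN fc.
rewrite (ge0_integralTE _ f0); apply: ge_ereal_sup => _ [k kf <-] /=.
rewrite -integral_cst //.
have -> : sintegral mu k = (\int[mu]_(x in setT) (k x)%:E)%E.
  by rewrite integral_nnsfun // patch_setT.
apply: ae_ge0_le_integral => //; first by move=> x _; rewrite lee_fin.
  by apply/measurable_EFinP; exact: measurable_funPT.
exists N; split => // x /= Nx; apply: contra_notP Nx => Nx _.
exact: le_trans (kf x) (fc x Nx).
Qed.

End IntegralComparison.

(* The lower bound is a step
   function built on the dyadic sublevel sets {u <= dl / 2^k}. *)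
Section DyadicDivergence.
Context (R : realType).
Local Notation I01 := (`[0%R, 1%R]%classic : set R).

(* For 0 < u <= dl, the dyadic sum u * \sum_{k<n, u 2^k <= dl} 2^k stays
   below 2 dl: it is a geometric sum whose last term is at most dl. *)
Lemma dyadic_sum_le (dl : R) (n : nat) (u : R) : 0 < u ->
  u * (\sum_(k < n) 2 ^+ k * (((u * 2 ^+ k <= dl)%R)%:R)) <=
  (if u <= dl then 2 * dl - u else 0).
Proof.
elim: n u => [|n IHn] u u0.
  by rewrite big_ord0 mulr0; case: ifP => // udl; lra.
rewrite big_ord_recl /= expr0 mul1r mulr1.
have -> : \sum_(i < n) 2 ^+ (bump 0 i) * (((u * 2 ^+ (bump 0 i) <= dl)%R)%:R : R)
  = 2 * \sum_(i < n) 2 ^+ i * ((((2 * u) * 2 ^+ i <= dl)%R)%:R : R).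
  rewrite mulr_sumr; apply: eq_bigr => i _.
  by rewrite /bump /= add1n exprS mulrA [u * 2]mulrC -mulrA.
have := IHn (2 * u); rewrite mulr_gt0 // => /(_ isT).
rewrite mulrDr mulrA [u * 2]mulrC; move: (\sum_(i < n) _) => S.
by case: (lerP u dl) => u_dl; case: ifP => u2_dl /=; lra.
Qed.

(* The step function \sum_{k<n} c 2^k / (2 dl) 1_{A k} built on sets
   A k = {0 < u <= dl / 2^k} of measure dl / 2^k in [0,1]: each term
   contributes c/2 to its integral, while it stays below c / u. *)
Section DyadicStep.
Variables (c dl : R) (A : nat -> set R) (u : R -> R).
Hypothesis mA : forall k, measurable (A k).
Hypothesis muA : forall k, lebesgue_measure (A k `&` I01) = (dl / 2 ^+ k)%:E.
Hypothesis Au : forall k t, I01 t -> (A k t <-> (0 < u t /\ u t * 2 ^+ k <= dl)).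

Let a (k : nat) : R := c / (2 * dl) * 2 ^+ k.

Let a_ge0 (k : nat) : 0 < c -> 0 < dl -> 0 <= a k.
Proof. by move=> c0 dl0; apply: mulr_ge0; [apply: divr_ge0|apply: exprn_ge0]; lra. Qed.

Definition dyadic_step (n : nat) (t : R) : \bar R :=
  (\sum_(k < n) (a k * \1_(A k) t)%:E)%E.

Lemma dyadic_step_ge0 (n : nat) (t : R) : 0 < c -> 0 < dl ->
  (0 <= dyadic_step n t)%E.
Proof.
move=> c0 dl0; rewrite /dyadic_step sumEFin lee_fin.
by apply: sumr_ge0 => k _; rewrite mulr_ge0 ?a_ge0.
Qed.

Lemma integral_dyadic_step (n : nat) : 0 < c -> 0 < dl ->
  (\int[lebesgue_measure]_(t in I01) dyadic_step n t)%E = (n%:R * (c / 2))%:E.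
Proof.
move=> c0 dl0.
have mI : measurable I01 by exact: measurable_itv.
have step k : (\int[lebesgue_measure]_(t in I01) (a k * \1_(A k) t)%:E)%E
              = (c / 2)%:E.
  have ak0 := a_ge0 k c0 dl0.
  under eq_integral do rewrite EFinM.
  rewrite ge0_integralZl_EFin //; last first.
    by apply/measurable_EFinP; apply: measurable_indic; exact: mA.
  rewrite integral_indic //; last exact: mA.
  transitivity ((a k)%:E * (dl / 2 ^+ k)%:E)%E; first by congr (_ * _)%E; exact: muA.
  rewrite -EFinM /a; congr EFin.
  by field; rewrite expf_neq0 ?andbT //; apply/andP; split; lra.
rewrite /dyadic_step ge0_integral_sum //; last 2 first.
- move=> k; apply/measurable_EFinP/measurable_funM; first exact: measurable_cst.
  by apply: measurable_indic; exact: mA.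
- by move=> k t _; rewrite lee_fin mulr_ge0 ?a_ge0.
under eq_bigr do rewrite step.
by rewrite sumEFin sumr_const card_ord mulr_natl.
Qed.

Let indic_A (k : nat) (t : R) : I01 t ->
  \1_(A k) t = (((0 < u t) && (u t * 2 ^+ k <= dl))%R)%:R :> R.
Proof.
move=> It; rewrite indicE.
suff -> : (t \in A k) = ((0 < u t) && (u t * 2 ^+ k <= dl))%R by [].
apply/idP/idP => [/set_mem /(@Au k t It) [-> ->] //|/andP[? ?]].
by apply/mem_set/(@Au k t It).
Qed.

Lemma dyadic_step_eq0 (n : nat) (t : R) : 0 < dl -> I01 t ->
  ~~ ((0 < u t) && (u t <= dl)) -> dyadic_step n t = 0%E.
Proof.
move=> dl0 It; rewrite negb_and -leNgt -ltNge => /orP[ut|udl].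
  by rewrite /dyadic_step sumEFin big1 // => k _; rewrite indic_A // ltNge ut mulr0.
rewrite /dyadic_step sumEFin big1 // => k _; rewrite indic_A //.
have : dl < u t * 2 ^+ k.
  have ut0 : 0 < u t by apply: lt_trans udl.
  apply: (lt_le_trans udl); rewrite ler_peMr ?(ltW ut0) //.
  by apply: exprn_ege1; lra.
by rewrite ltNge => /negbTE ->; rewrite andbF mulr0.
Qed.

Lemma dyadic_step_le (n : nat) (t : R) : 0 < c -> 0 < dl ->
  I01 t -> 0 < u t -> u t <= dl -> (dyadic_step n t <= (c / u t)%:E)%E.
Proof.
move=> c0 dl0 It ut udl; rewrite /dyadic_step sumEFin lee_fin.
have -> : \sum_(k < n) a k * \1_(A k) t =
    c / (2 * dl) * \sum_(k < n) 2 ^+ k * (((u t * 2 ^+ k <= dl)%R)%:R).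
  by rewrite mulr_sumr; apply: eq_bigr => k _; rewrite indic_A // ut /= /a mulrA.
have := @dyadic_sum_le dl n (u t) ut; rewrite udl.
set S := \sum_(k < n) _ => uS_le.
rewrite ler_pdivlMr //.
have -> : c / (2 * dl) * S * u t = c / (2 * dl) * (u t * S) by ring.
apply: (@le_trans _ _ (c / (2 * dl) * (2 * dl))); last by rewrite divfK //; lra.
by apply: ler_wpM2l; [rewrite divr_ge0 //; lra|lra].
Qed.

(* Hence a nonnegative F >= c / u on {0 < u <= dl} has infinite integral
   on [0,1]: it dominates step functions of arbitrarily large integral. *)
Lemma integral_dyadic_blowup (F : R -> \bar R) : 0 < c -> 0 < dl ->
  (forall t, (0 <= F t)%E) ->
  (forall t, I01 t -> 0 < u t -> u t <= dl -> ((c / u t)%:E <= F t)%E) ->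
  (\int[lebesgue_measure]_(t in I01) F t)%E = +oo%E.
Proof.
move=> c0 dl0 F0 Fb.
have step_le_F n t : I01 t -> (dyadic_step n t <= F t)%E.
  move=> It; have [/andP[ut udl]|out] := boolP ((0 < u t) && (u t <= dl)).
    exact: le_trans (dyadic_step_le n c0 dl0 It ut udl) (Fb t It ut udl).
  by rewrite dyadic_step_eq0.
apply/eqyP => B B0.
set n := (Num.Def.truncn (2 * B / c)).+1.
apply: le_trans (@ge0_le_integral_nomeas _ _ _ lebesgue_measure _ _ _
  (fun t _ => dyadic_step_ge0 n t c0 dl0) (step_le_F n)).
rewrite integral_dyadic_step // lee_fin -ler_pdivrMr; last by lra.
apply: ltW; apply: le_lt_trans (truncnS_gt (2 * B / c)).
by rewrite le_eqVlt; apply/orP; left; apply/eqP; field; lra.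
Qed.

End DyadicStep.

Lemma integral_blowup_at_0 (F : R -> \bar R) (c dl : R) :
  0 < c -> 0 < dl -> dl <= 1 -> (forall t, (0 <= F t)%E) ->
  (forall t, 0 < t -> t <= dl -> ((c / t)%:E <= F t)%E) ->
  (\int[lebesgue_measure]_(t in I01) F t)%E = +oo%E.
Proof.
move=> c0 dl0 dl1 F0 Fb.
have pow_ge1 k : (1 : R) <= 2 ^+ k by apply: exprn_ege1; lra.
apply: (@integral_dyadic_blowup c dl (fun k => [set` `]0, dl / 2 ^+ k]]) id)
  => // [k|k t _|t _ t0 tdl].
- have e0 : 0 < dl / 2 ^+ k by rewrite divr_gt0 ?exprn_gt0.
  rewrite setIidl; first by rewrite lebesgue_measure_itv /= lte_fin e0 -EFinD subr0.
  move=> t /=; rewrite !in_itv /= => /andP[t0 te].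
  rewrite (ltW t0) (le_trans te) //.
  by rewrite ler_pdivrMr ?exprn_gt0 //; have := pow_ge1 k; lra.
- by rewrite /= in_itv /= ler_pdivlMr ?exprn_gt0 //; split => [/andP[]|[-> ->]].
- exact: Fb.
Qed.

Lemma integral_blowup_at_1 (F : R -> \bar R) (c dl : R) :
  0 < c -> 0 < dl -> dl <= 1 -> (forall t, (0 <= F t)%E) ->
  (forall t, 0 < 1 - t -> 1 - t <= dl -> ((c / (1 - t))%:E <= F t)%E) ->
  (\int[lebesgue_measure]_(t in I01) F t)%E = +oo%E.
Proof.
move=> c0 dl0 dl1 F0 Fb.
have pow_ge1 k : (1 : R) <= 2 ^+ k by apply: exprn_ege1; lra.
apply: (@integral_dyadic_blowup c dl (fun k => [set` `[1 - dl / 2 ^+ k, 1[])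
  (fun t => 1 - t)) => // [k|k t _|t _ t0 tdl].
- have e0 : 0 < dl / 2 ^+ k by rewrite divr_gt0 ?exprn_gt0.
  have e1 : dl / 2 ^+ k <= 1.
    by rewrite ler_pdivrMr ?exprn_gt0 //; have := pow_ge1 k; lra.
  rewrite setIidl.
    rewrite lebesgue_measure_itv /= lte_fin ltrBlDr ltrDl e0 -EFinD.
    by congr EFin; ring.
  by move=> t /=; rewrite !in_itv /= => /andP[? ?]; apply/andP; split; lra.
- rewrite /= in_itv /= -ler_pdivlMr ?exprn_gt0 //.
  by split => [/andP[? ?]|[? ?]]; [split|apply/andP; split]; lra.
- exact: Fb.
Qed.

End DyadicDivergence.

(* Every open set is
   a countable union of open rectangles with rational corners, hence
   measurable; this gives the measure-theoretic content of the support. *)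
Section PlaneMeasurability.
Context (R : realType).
Local Notation C := (R * R)%type.

Definition rat_rect (q : rat * rat * rat * rat) : set C :=
  [set` `]ratr q.1.1.1, ratr q.1.1.2[%R] `*` [set` `]ratr q.1.2, ratr q.2[%R].

Lemma rat_rect_measurable (q : rat * rat * rat * rat) : measurable (rat_rect q).
Proof. by apply: measurableX; exact: measurable_itv. Qed.

Lemma rat_around (x e : R) : 0 < e ->
  exists a b : rat, [/\ x - e < ratr a, ratr a < x, x < ratr b & ratr b < x + e].
Proof.
move=> e0.
have [a] := @rat_in_itvoo _ (x - e) x ltac:(by rewrite ltrBlDr ltrDl).
rewrite in_itv /= => /andP[? ?].
have [b] := @rat_in_itvoo _ x (x + e) ltac:(by rewrite ltrDl).
rewrite in_itv /= => /andP[? ?].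
by exists a, b.
Qed.

Lemma rat_rect_nbhs (U : set C) (p : C) : open U -> U p ->
  exists q, rat_rect q p /\ rat_rect q `<=` U.
Proof.
move=> oU Up; have /nbhs_ballP[e /= e0 eU] := open_nbhs_nbhs (conj oU Up).
have [a1 [b1 [? ? ? ?]]] := @rat_around p.1 e e0.
have [a2 [b2 [? ? ? ?]]] := @rat_around p.2 e e0.
exists (a1, b1, a2, b2); split; first by split; rewrite /= in_itv /=; apply/andP.
move=> z [/=]; rewrite !in_itv /= => /andP[? ?] /andP[? ?].
apply: eU; rewrite ball_prod_normE /ball_ /= prod_normE /= gt_max.
by apply/andP; split; rewrite ltr_norml; apply/andP; split; rewrite ?opprB; lra.
Qed.

(* The n-th rational rectangle if it satisfies P, the empty set otherwise;
   enumerates the countable family of rational rectangles with property P. *)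
Definition rat_rect_sel (P : set C -> Prop) (n : nat) : set C :=
  if unpickle n is Some q then
    if pselect (P (rat_rect q)) then rat_rect q else set0
  else set0.

Lemma rat_rect_sel_measurable (P : set C -> Prop) (n : nat) :
  measurable (rat_rect_sel P n).
Proof.
rewrite /rat_rect_sel; case: (unpickle n) => [q|//].
by case: (pselect (P (rat_rect q))) => HP; [exact: rat_rect_measurable|exact: measurable0].
Qed.

Lemma rat_rect_sel_cover (P : set C -> Prop) (U : set C) :
  (forall p, U p -> exists q, rat_rect q p /\ P (rat_rect q)) ->
  U `<=` \bigcup_n rat_rect_sel P n.
Proof.
move=> UP p /UP[q [qp Pq]]; exists (pickle q); first by [].
by rewrite /rat_rect_sel pickleK; case: (pselect (P (rat_rect q))) => // /(_ Pq).
Qed.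

Lemma open_measurable_plane (U : set C) : open U -> measurable U.
Proof.
move=> oU; have -> : U = \bigcup_n rat_rect_sel (fun A => A `<=` U) n.
  apply/seteqP; split.
    apply: rat_rect_sel_cover => p Up.
    by have [q [qp qU]] := @rat_rect_nbhs U p oU Up; exists q.
  move=> p [n _]; rewrite /rat_rect_sel.
  by case: (unpickle n) => [q|//]; case: pselect => // qU /qU.
by apply: bigcupT_measurable => n; exact: rat_rect_sel_measurable.
Qed.

Lemma set1_measurable_plane (z0 : C) : measurable [set z0].
Proof.
have -> : [set z0] = [set z0.1] `*` [set z0.2].
  apply/seteqP; split => [z /= ->|[z1 z2] /= [/= -> ->]] //; by case: z0.
by apply: measurableX; exact: measurable_set1.
Qed.

(* The complement of the closed support of a measure is negligible: it is
   covered by the countably many rational rectangles of measure zero. *)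
Lemma msupp_compl_negligible (mu : {measure set C -> \bar R}) :
  mu.-negligible (~` msupp mu).
Proof.
pose P := fun A : set C => mu A = 0%E.
apply: (@negligibleS _ _ _ _ (\bigcup_n rat_rect_sel P n)).
  apply: rat_rect_sel_cover => p /= /existsNP[U /not_implyP[oU /not_implyP[Up]]].
  move=> /negP; rewrite -leNgt => mU0.
  have [q [qp qU]] := @rat_rect_nbhs U p oU Up; exists q; split => //.
  apply/eqP; rewrite /P eq_le measure_ge0 andbT (le_trans _ mU0) //.
  apply: le_measure; rewrite ?inE //; first exact: rat_rect_measurable.
  exact: (@open_measurable_plane U).
apply: negligible_bigcup => n; apply/negligibleP; first exact: rat_rect_sel_measurable.
rewrite /rat_rect_sel; case: (unpickle n) => [q|]; last exact: measure0.
by case: (pselect (P (rat_rect q))) => HP; [exact: HP|exact: measure0].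
Qed.

End PlaneMeasurability.

Section BrokenLineGeometry.
Context (R : realType).
Local Notation C := (R * R)%type.

Lemma cdist_ge0 (z w : C) : 0 <= cdist z w.
Proof. exact: sqrtr_ge0. Qed.

Lemma cdist_sym (z w : C) : cdist z w = cdist w z.
Proof. by rewrite /cdist; congr Num.sqrt; ring. Qed.

Lemma cdist_eq0 (z w : C) : cdist z w = 0 -> z = w.
Proof.
rewrite /cdist => /eqP; rewrite sqrtr_eq0 => sum_le0.
have : (z.1 - w.1) ^+ 2 + (z.2 - w.2) ^+ 2 == 0.
  by rewrite eq_le sum_le0 addr_ge0 ?sqr_ge0.
rewrite paddr_eq0 ?sqr_ge0 // !sqrf_eq0 !subr_eq0 => /andP[/eqP e1 /eqP e2].
by case: z w e1 e2 {sum_le0} => [z1 z2] [w1 w2] /= -> ->.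
Qed.

Lemma cdist_gt0 (z w : C) : z <> w -> 0 < cdist z w.
Proof.
by move=> zw; rewrite lt_neqAle cdist_ge0 andbT; apply/eqP => /esym/cdist_eq0.
Qed.

Lemma cdist_ge_coord (z w : C) :
  `|z.1 - w.1| <= cdist z w /\ `|z.2 - w.2| <= cdist z w.
Proof.
have s0 := addr_ge0 (sqr_ge0 (z.1 - w.1)) (sqr_ge0 (z.2 - w.2)).
by split; rewrite -sqrtr_sqr /cdist ler_sqrt // ?lerDl ?lerDr sqr_ge0.
Qed.

Lemma cdist_le_coord (z w : C) : cdist z w <= `|z.1 - w.1| + `|z.2 - w.2|.
Proof.
have n1 := normr_ge0 (z.1 - w.1); have n2 := normr_ge0 (z.2 - w.2).
rewrite -[X in _ <= X]ger0_norm ?addr_ge0 // -sqrtr_sqr /cdist ler_sqrt ?sqr_ge0 //.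
rewrite -(real_normK (num_real (z.1 - w.1))) -(real_normK (num_real (z.2 - w.2))).
move: n1 n2; set a := `|_ - _|; set b := `|_ - _| => n1 n2.
by have := mulr_ge0 n1 n2; rewrite sqrrD mulr2n; lra.
Qed.

Lemma cdist_lerp_l (a b : C) (k : R) : 0 <= k ->
  cdist (a + k *: (b - a)) a = k * cdist a b.
Proof.
move=> k0; rewrite /cdist /=.
have -> : (a.1 + k * (b.1 - a.1) - a.1) ^+ 2 + (a.2 + k * (b.2 - a.2) - a.2) ^+ 2
  = k ^+ 2 * ((a.1 - b.1) ^+ 2 + (a.2 - b.2) ^+ 2) by ring.
by rewrite sqrtrM ?sqr_ge0 // sqrtr_sqr ger0_norm.
Qed.

Lemma cdist_lerp_r (a b : C) (k : R) : k <= 1 ->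
  cdist (a + k *: (b - a)) b = (1 - k) * cdist a b.
Proof.
move=> k1; rewrite /cdist /=.
have -> : (a.1 + k * (b.1 - a.1) - b.1) ^+ 2 + (a.2 + k * (b.2 - a.2) - b.2) ^+ 2
  = (1 - k) ^+ 2 * ((a.1 - b.1) ^+ 2 + (a.2 - b.2) ^+ 2) by ring.
by rewrite sqrtrM ?sqr_ge0 // sqrtr_sqr ger0_norm // subr_ge0.
Qed.

Lemma bl_length_ge0 (s : seq C) : 0 <= bl_length s.
Proof.
elim: s => [|a [|b s] IHs] //=.
by rewrite addr_ge0 // cdist_ge0.
Qed.

Lemma bl_length_cons2 (a b : C) (s : seq C) :
  bl_length [:: a, b & s] = cdist a b + bl_length (b :: s).
Proof. by []. Qed.

Lemma bl_length_gt0 (s : seq C) : broken_line s -> 0 < bl_length s.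
Proof.
case: s => [|a [|b s]] [] // _ [ab _]; rewrite bl_length_cons2.
by apply: ltr_wpDr; [exact: bl_length_ge0|exact: cdist_gt0].
Qed.

Lemma arcpt_first (a b : C) (s : seq C) (u : R) : u <= cdist a b ->
  arcpt [:: a, b & s] u = a + (u / cdist a b) *: (b - a).
Proof. by move=> ud; rewrite [arcpt _ _]/= ud. Qed.

Lemma arcpt_next (a b : C) (s : seq C) (u : R) : cdist a b < u ->
  arcpt [:: a, b & s] u = arcpt (b :: s) (u - cdist a b).
Proof.
by move=> du; rewrite {1}/arcpt -/arcpt ifF //; apply/negbTE; rewrite -ltNge.
Qed.

Lemma arcpt_near_last (s : seq C) : broken_line s ->
  exists dl, [/\ 0 < dl, dl <= bl_length s &
    forall v, 0 <= v -> v < dl ->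
      cdist (arcpt s (bl_length s - v)) (last 0 s) = v].
Proof.
case=> + cs; elim: s cs => [|a [|b [|c s]] IHs] // [ab cs] _.
  have d0 := @cdist_gt0 a b ab.
  exists (cdist a b); split => // [|v v0 vd]; first by rewrite [bl_length _]/= addr0.
  rewrite [bl_length _]/= addr0 arcpt_first; last by lra.
  rewrite cdist_lerp_r; first by field; rewrite gt_eqF.
  by rewrite ler_pdivrMr // mul1r; lra.
have [dl [dl0 dlL near_last]] := IHs cs isT.
have := cdist_ge0 a b; rewrite bl_length_cons2 => ab0.
exists dl; split => [//|//|v v0 vd]; first lra.
rewrite arcpt_next; last by lra.
have -> : cdist a b + bl_length [:: b, c & s] - v - cdist a b =
  bl_length [:: b, c & s] - v by ring.
exact: near_last.
Qed.

Lemma bl_param_near_head (s : seq C) : broken_line s ->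
  exists2 dl, 0 < dl <= 1 &
    forall t, 0 <= t <= dl -> cdist (bl_param s t) (head 0 s) = t * bl_length s.
Proof.
case: s => [|a [|b s]] [] // _ [ab _].
have d0 := @cdist_gt0 a b ab; have L0 := bl_length_ge0 (b :: s).
set L := bl_length [:: a, b & s].
have LE : L = cdist a b + bl_length (b :: s) by [].
exists (cdist a b / L) => [|t /andP[t0 tdl]].
  by rewrite divr_gt0 ?ler_pdivrMr ?mul1r //=; lra.
have tL : t * L <= cdist a b by rewrite -ler_pdivlMr //; lra.
have k0 : 0 <= t * L / cdist a b by apply: divr_ge0; [apply: mulr_ge0|]; lra.
by rewrite /bl_param -/L arcpt_first // cdist_lerp_l // divfK // gt_eqF.
Qed.

Lemma bl_param_near_last (s : seq C) : broken_line s ->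
  exists2 dl, 0 < dl <= 1 &
    forall t, 0 <= 1 - t <= dl ->
      cdist (bl_param s t) (last 0 s) = (1 - t) * bl_length s.
Proof.
move=> bs; have L0 := @bl_length_gt0 s bs.
have [dq [dq0 dqL near_last]] := @arcpt_near_last s bs.
set L := bl_length s in L0 dqL near_last *.
exists (dq / (2 * L)) => [|t /andP[t0 tdl]].
  by rewrite divr_gt0 ?ler_pdivrMr ?mul1r //=; lra.
have vq : (1 - t) * L < dq.
  by move: tdl; rewrite ler_pdivlMr; lra.
rewrite /bl_param -/L (_ : t * L = L - (1 - t) * L); last by ring.
by rewrite near_last // mulr_ge0 // ltW.
Qed.

End BrokenLineGeometry.

(* Splitting
   ln|z - zeta| into its positive and negative parts: the positive part is
   at most ln D on the support (bounded), the negative part is at least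
   -ln|z - z0| on the atom {z0}. *)
Section PotentialNearAtom.
Context (R : realType).
Local Notation C := (R * R)%type.
Variable om : {finite_measure set C -> \bar R}.

Lemma lnabs_pos_le (z w : C) (D : R) : 1 <= D -> cdist z w <= D ->
  ((lnabs z)^\+ w <= (ln D)%:E)%E.
Proof.
move=> D1 zw; have lnD : 0 <= ln D by exact: ln_ge0.
rewrite funeposE ge_max lee_fin lnD andbT /lnabs.
case: ifP => [_|/negbT zw0]; first by rewrite leNye.
have zw_gt0 : 0 < cdist z w by rewrite lt_neqAle eq_sym zw0 cdist_ge0.
by rewrite lee_fin ler_ln ?posrE //; lra.
Qed.

Lemma integral_lnabs_pos_le (z : C) (D : R) (N : set C) :
  1 <= D -> measurable N -> om N = 0%E -> (forall w, ~ N w -> cdist z w <= D) ->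
  (\int[om]_(w in [set: C]) (lnabs z)^\+ w <= (ln D * fine (om setT))%:E)%E.
Proof.
move=> D1 mN omN zD.
rewrite EFinM fineK ?fin_num_measure //.
apply: (@ge0_integral_le_ae_cst _ _ _ om _ _ N) => // [|w Nw]; first exact: ln_ge0.
exact: lnabs_pos_le (zD w Nw).
Qed.

Lemma integral_lnabs_neg_ge (z z0 : C) :
  0 < cdist z z0 -> cdist z z0 <= 1 ->
  ((- ln (cdist z z0) * fine (om [set z0]))%:E <=
     \int[om]_(w in [set: C]) (lnabs z)^\- w)%E.
Proof.
move=> r0 r1; set r := cdist z z0.
have lnr : 0 <= - ln r by rewrite oppr_ge0; exact: ln_le0.
have m1 := @set1_measurable_plane R z0.
apply: (@le_trans _ _ (\int[om]_(w in [set: C]) ((- ln r) * \1_[set z0] w)%:E)%E).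
  under eq_integral do rewrite EFinM.
  have int1 : (\int[om]_(w in [set: C]) (\1_[set z0] w)%:E)%E = om [set z0].
    by have := @integral_indic _ _ _ om setT measurableT _ m1; rewrite setIT.
  rewrite ge0_integralZl_EFin //; last first.
    by apply/measurable_EFinP; exact: measurable_indic.
  rewrite EFinM; apply: lee_wpmul2l; first by rewrite lee_fin.
  rewrite fineK ?fin_num_measure // le_eqVlt; apply/orP; left; apply/eqP.
  exact: esym int1.
apply: (@ge0_le_integral_nomeas _ _ _ om) => w _; first by rewrite lee_fin mulr_ge0.
rewrite funenegE indicE; case: (boolP (w \in [set z0])) => [/set_mem ->|_].
  rewrite mulr1 le_max; apply/orP; left.
  by rewrite /lnabs -/r ifF ?gt_eqF.
by rewrite mulr0 le_max lexx orbT.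
Qed.

Lemma logpot_le_near_atom (z0 z : C) (D : R) (N : set C) :
  1 <= D -> measurable N -> om N = 0%E -> (forall w, ~ N w -> cdist z w <= D) ->
  ((2 * pi)%:E <= om [set z0])%E -> 0 < cdist z z0 -> cdist z z0 <= 1 ->
  (logpot om z <= (ln D * fine (om setT) / (2 * pi) + ln (cdist z z0))%:E)%E.
Proof.
move=> D1 mN omN zD atom r0 r1; set r := cdist z z0.
have pi0 : 0 < pi :> R := pi_gt0 R.
have m2pi : 2 * pi <= fine (om [set z0]).
  by rewrite -lee_fin fineK ?fin_num_measure //; exact: set1_measurable_plane.
have lnr : ln r <= 0 by exact: ln_le0.
rewrite /logpot integralE.
apply: (@le_trans _ _ (((2 * pi)^-1)%:E *
    (ln D * fine (om setT) - (- ln r * fine (om [set z0])))%:E)%E).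
  apply: lee_wpmul2l; first by rewrite lee_fin invr_ge0; lra.
  rewrite EFinB; apply: leeB; first exact: integral_lnabs_pos_le D1 mN omN zD.
  exact: integral_lnabs_neg_ge r0 r1.
rewrite -EFinM lee_fin mulrC ler_pdivrMr; last lra.
by rewrite mulrDl divfK ?gt_eqF //; nra.
Qed.

Lemma sqrt_lam_ge_near_atom (h : C -> R) (z0 z : C) (D : R) (N : set C) (H : R) :
  1 <= D -> measurable N -> om N = 0%E -> (forall w, ~ N w -> cdist z w <= D) ->
  ((2 * pi)%:E <= om [set z0])%E -> 0 < cdist z z0 -> cdist z z0 <= 1 ->
  h z <= H ->
  ((expR (- (ln D * fine (om setT) / (2 * pi) + H)) / cdist z z0)%:E
     <= poweR (lam om h z) 2^-1)%E.
Proof.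
move=> D1 mN omN zD atom r0 r1 hH.
have := @logpot_le_near_atom z0 z D N D1 mN omN zD atom r0 r1.
set A := ln D * fine (om setT) / (2 * pi); set r := cdist z z0 => pot.
set Y := A + ln r + H.
have pY : (logpot om z + (h z)%:E <= Y%:E)%E.
  by rewrite /Y EFinD; apply: leeD => //; rewrite lee_fin.
have lamY : ((expR (- (2 * Y)))%:E <= lam om h z)%E.
  rewrite /lam (_ : (expR _)%:E = expeR (- (2%:E * Y%:E))%E) //.
  by rewrite lee_expeR leeN2; exact: lee_wpmul2l.
rewrite poweR12_sqrt ?expeR_ge0 //.
apply: (@le_trans _ _ (sqrte (expR (- (2 * Y)))%:E)); last first.
  by rewrite lee_sqrt ?expeR_ge0.
rewrite (_ : sqrte _ = (Num.sqrt (expR (- (2 * Y))))%:E) // lee_fin.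
rewrite (_ : expR (- (2 * Y)) = expR (- Y) ^+ 2); last first.
  by rewrite -expRM_natl mulrN.
rewrite sqrtr_sqr ger0_norm ?expR_ge0 // (_ : - Y = - (A + H) + - ln r).
  by rewrite expRD (expRN (ln r)) (@lnK _ r) ?posrE.
by rewrite /Y; ring.
Qed.

End PotentialNearAtom.

Section BlowUp.
Context (R : realType).
Local Notation C := (R * R)%type.

Lemma continuous_le_near (h : C -> R) (z0 : C) : {for z0, continuous h} ->
  exists2 e : R, 0 < e & forall z, cdist z z0 < e -> h z <= h z0 + 1.
Proof.
move=> hc; have : nbhs z0 (h @^-1` ball (h z0) 1) by apply: hc; exact: nbhsx_ballx.
move=> /nbhs_ballP[e /= e0 he]; exists e => // z zz0.
have : ball (h z0) 1 (h z).
  apply: he; rewrite ball_prod_normE /ball_ /= prod_normE /= gt_max cdist_sym in zz0 *.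
  have [c1 c2] := cdist_ge_coord z0 z.
  by apply/andP; split; apply: le_lt_trans zz0.
by rewrite /ball /= ltr_distlC => /andP[_ ?]; lra.
Qed.

Lemma compact_cdist_le (K : set C) (z0 : C) : compact K ->
  exists2 D : R, 1 <= D &
    forall z w, cdist z z0 <= 1 -> K w -> cdist z w <= D.
Proof.
move=> /compact_bounded[M0 [_ KM]].
have KM1 w : K w -> `|w| <= M0 + 1 by apply: KM; rewrite ltrDl.
set Mb := Num.max (M0 + 1) 0.
have Mb0 : 0 <= Mb by rewrite le_max lexx orbT.
have KMb w : K w -> `|w.1| <= Mb /\ `|w.2| <= Mb.
  move=> /KM1; rewrite prod_normE ge_max => /andP[w1 w2].
  by split; rewrite le_max ?w1 ?w2.
have n1 := normr_ge0 z0.1; have n2 := normr_ge0 z0.2.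
exists (2 + `|z0.1| + `|z0.2| + 2 * Mb) => [|z w zz0 /KMb[w1 w2]]; first lra.
apply: le_trans (cdist_le_coord z w) _.
have [c1 c2] := cdist_ge_coord z z0.
have a1 := ler_distD z0.1 z.1 w.1; have a2 := ler_distD z0.2 z.2 w.2.
have b1 := ler_normB z0.1 w.1; have b2 := ler_normB z0.2 w.2.
lra.
Qed.

Lemma sqrt_lam_blowup (om : {finite_measure set C -> \bar R}) (h : C -> R)
    (z0 : C) :
  compact (msupp om) -> {for z0, continuous h} ->
  ((2 * pi)%:E <= om [set z0])%E ->
  exists r0 c : R, [/\ 0 < r0, 0 < c & forall z,
    0 < cdist z z0 -> cdist z z0 <= r0 ->
    ((c / cdist z z0)%:E <= poweR (lam om h z) 2^-1)%E].
Proof.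
move=> cK hc atom.
have [N [mN omN suppN]] := msupp_compl_negligible om.
have [D D1 zD] := compact_cdist_le z0 cK.
have [e e0 he] := continuous_le_near hc.
exists (e / (2 + e)), (expR (- (ln D * fine (om setT) / (2 * pi) + (h z0 + 1)))).
split => [||z r0 rr]; [by apply: divr_gt0; lra|exact: expR_gt0|].
have r1 : cdist z z0 <= 1 by apply: (le_trans rr); rewrite ler_pdivrMr; lra.
apply: (sqrt_lam_ge_near_atom D1 mN omN) => // [w Nw|].
  by apply: zD r1 _; apply: contra_notP Nw => /suppN.
by apply: he; apply: (le_lt_trans rr); rewrite ltr_pdivrMr; nra.
Qed.

(* If lambda^{1/2} >= c / |z - z0| near z0, then tilde s_lambda(K) = +oo
   for every broken line K starting or ending at z0: along K the distance to
   z0 is L t (resp. L (1 - t)) near the extremity, so the integrand is at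
   least (c / L) / t (resp. (c / L) / (1 - t)). *)
Lemma stilde_blowup_at_end (lm : C -> \bar R) (z0 : C) (r0 c : R) (K : seq C) :
  0 < r0 -> 0 < c ->
  (forall z, 0 < cdist z z0 -> cdist z z0 <= r0 ->
     ((c / cdist z z0)%:E <= poweR (lm z) 2^-1)%E) ->
  broken_line K -> (head 0 K = z0 \/ last 0 K = z0) ->
  stilde lm K = +oo%E.
Proof.
move=> r00 c0 key bK hd_lt; have L0 := bl_length_gt0 bK.
set L := bl_length K in L0 *.
have F0 t : (0 <= poweR (lm (bl_param K t)) 2^-1)%E by exact: poweR_ge0.
have lower z u : 0 < u -> u <= r0 / L -> cdist z z0 = u * L ->
    (((c / L) / u)%:E <= poweR (lm z) 2^-1)%E.
  move=> u0 ur0 zu; have := key z; rewrite zu => /(_ (mulr_gt0 u0 L0)).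
  rewrite -ler_pdivlMr // => /(_ ur0).
  by rewrite (_ : c / (u * L) = c / L / u) //; field; rewrite !gt_eqF.
have cL : 0 < c / L by exact: divr_gt0.
have rL : 0 < r0 / L by exact: divr_gt0.
rewrite /stilde -/L.
suff -> : (\int[lebesgue_measure]_(t in `[0%R, 1%R]%classic)
    poweR (lm (bl_param K t)) 2^-1)%E = +oo%E.
  by rewrite muleC gt0_mulye // lte_fin.
case: hd_lt => [hd|lt].
- have [dl /andP[dl0 dl1] near] := bl_param_near_head bK.
  apply: (integral_blowup_at_0 (dl := Num.min dl (r0 / L)) cL) => //.
  + by rewrite lt_min dl0.
  + by rewrite ge_min dl1.
  move=> t t0; rewrite le_min => /andP[tdl tr].
  by apply: (lower _ _ t0 tr); rewrite -hd; apply: near; rewrite (ltW t0) tdl.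
- have [dl /andP[dl0 dl1] near] := bl_param_near_last bK.
  apply: (integral_blowup_at_1 (dl := Num.min dl (r0 / L)) cL) => //.
  + by rewrite lt_min dl0.
  + by rewrite ge_min dl1.
  move=> t t0; rewrite le_min => /andP[tdl tr].
  by apply: (lower _ _ t0 tr); rewrite -lt; apply: near; rewrite (ltW t0) tdl.
Qed.

End BlowUp.

Theorem lemma4p20 (R : realType) (M : set (R * R)%type)
    (om : {finite_measure set (R * R)%type -> \bar R}) (h : (R * R)%type -> R)
    (z0 : (R * R)%type) :
  bounded_domain M ->
  compact (msupp om) ->
  harmonic_on M h ->
  M z0 ->
  ((2 * pi)%:E <= om [set z0])%E ->
  (forall K : seq (R * R)%type,
      broken_line K -> bl_in M K -> (head 0 K = z0 \/ last 0 K = z0) ->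
      stilde (lam om h) K = +oo%E) /\
  (forall z, M z -> z <> z0 -> rho M (lam om h) z0 z = +oo%E).
Proof.
move=> _ cK harm Mz0 atom.
have hc : {for z0, continuous h} by have [_ [[hc _] _]] := harm z0 Mz0.
have [r0 [c [r00 c0 key]]] := sqrt_lam_blowup cK hc atom.
have blowup K : broken_line K -> (head 0 K = z0 \/ last 0 K = z0) ->
    stilde (lam om h) K = +oo%E.
  exact: stilde_blowup_at_end r00 c0 key.
split => [K bK _|z _ _]; first exact: blowup.
apply/ereal_inf_pinfty => _ [s [bs [_ [hs _]]] <-].
exact: blowup bs (or_introl hs).
Qed.
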